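(* Let $(A_C,\mathcal R_A)$ be an autocatalytic core of a CRN. Then its stoichiometric matrix $\overline{\mathbb S}=(\mathbb S)_{A_C}^{\mathcal R_A}$ is a minimal semi-positive matrix.
   Context: A chemical reaction network (CRN) consists of a finite species set $\mathcal S$ and a finite set $\mathcal R$ of reactions; each reaction $r$ is written $r^-\to r^+$ with input complex $r^-\in\mathbb Z_{\ge0}^{\mathcal S}$ and output complex $r^+\in\mathbb Z_{\ge0}^{\mathcal S}$. The input and output matrices $\mathbb S^-,\mathbb S^+$ are the $\mathcal S\times\mathcal R$ matrices whose column indexed by $r$ is $r^-$, resp. $r^+$; the stoichiometric matrix is $\mathbb S=\mathbb S^+-\mathbb S^-$. For a matrix $\mathbb A$ with rows indexed by $\mathcal S$ and columns by $\mathcal R$ and subsets $M\subseteq\mathcal S$, $N\subseteq\mathcal R$, $(\mathbb A)_M^N$ is the submatrix with rows in $M$ and columns in $N$. For a vector $\mathbf v$: $\mathbf v\gg\mathbf 0$ means all entries are $>0$; $\mathbf v>\mathbf 0$ (semi-positive) means all entries are $\ge0$ and $\mathbf v\ne\mathbf 0$. A motif is a pair $(\mathcal M,\mathcal R')$ with $\mathcal M\subseteq\mathcal S$, $\mathcal R'\subseteq\mathcal R$. It is exclusively autocatalytic if: (i) there is $\mathbf v\in\mathbb R^{\mathcal R'}$, $\mathbf v\gg\mathbf0$, with $(\mathbb S)_{\mathcal M}^{\mathcal R'}\mathbf v\gg\mathbf 0$; (ii) every row of $(\mathbb S^-)_{\mathcal M}^{\mathcal R'}$ is semi-positive; (iii)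 every column of $(\mathbb S^-)_{\mathcal M}^{\mathcal R'}$ is semi-positive. An autocatalytic core is an exclusively autocatalytic motif $(A_C,\mathcal R_A)$ such that no motif $(\mathcal M',\mathcal R'')\neq(A_C,\mathcal R_A)$ with $\mathcal M'\subseteq A_C$ and $\mathcal R''\subseteq\mathcal R_A$ is exclusively autocatalytic. A real matrix $\mathbb A$ is semi-positive if there is $\mathbf v\gg\mathbf 0$ with $\mathbb A\mathbf v\gg\mathbf0$; it is minimal semi-positive if it is semi-positive and no matrix obtained from $\mathbb A$ by deleting one or more columns is semi-positive. *)

From mathcomp Require Import all_boot all_order all_algebra.
From mathcomp Require Import reals.
Set Implicit Arguments. Unset Strict Implicit. Unset Printing Implicit Defensive.
Import Order.TTheory GRing.Theory Num.Theory.
Local Open Scope ring_scope.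

(* A chemical reaction network: finite species type [S], finite reaction
   type [Rx], input matrix [Sin] (column r = r^-) and output matrix [Sout]
   (column r = r^+), with nonnegative integer entries. *)
Record CRN := {
  species : finType;
  reaction : finType;
  Sin : species -> reaction -> nat;
  Sout : species -> reaction -> nat }.

Definition stoich (R : realType) (G : CRN) (s : species G) (r : reaction G) : R :=
  (Sout s r)%:R - (Sin s r)%:R.

Definition semipositive_sub (R : realType) (I J : finType) (A : I -> J -> R)
    (P : {set I}) (Q : {set J}) : Prop :=
  exists v : J -> R,
    (forall j, j \in Q -> 0 < v j) /\
    (forall i, i \in P -> 0 < \sum_(j in Q) A i j * v j).

Definition minimal_semipositive_sub (R : realType) (I J : finType)
    (A : I -> J -> R) (P : {set I}) (Q : {set J}) : Prop :=
  semipositive_sub A P Q /\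
  (forall Q' : {set J}, Q' \proper Q -> ~ semipositive_sub A P Q').

(* Exclusively autocatalytic motif (M, N); a motif is taken to be nonempty. *)
Definition exclusively_autocatalytic (R : realType) (G : CRN)
    (M : {set species G}) (N : {set reaction G}) : Prop :=
  [/\ M != set0, N != set0,
      (* (i) *)  semipositive_sub (@stoich R G) M N,
      (* (ii) every row of (S^-)_M^N is semi-positive (entries are >= 0) *)
      (forall s, s \in M -> exists2 r, r \in N & Sin s r != 0%N) &
      (* (iii) every column of (S^-)_M^N is semi-positive *)
      (forall r, r \in N -> exists2 s, s \in M & Sin s r != 0%N)].

Definition autocatalytic_core (R : realType) (G : CRN)
    (AC : {set species G}) (RA : {set reaction G}) : Prop :=
  exclusively_autocatalytic R AC RA /\
  (forall (M' : {set species G}) (N' : {set reaction G}),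
      M' \subset AC -> N' \subset RA -> (M', N') <> (AC, RA) ->
      ~ exclusively_autocatalytic R M' N').

(* Semi-positivity is condition (i) of exclusive autocatalysis.  For
   minimality, suppose the columns Q' ⊊ R_A already give a semi-positive
   matrix (S)_{A_C}^{Q'}.  Keep only the species of A_C that some reaction of
   Q' consumes: the motif (consumed A_C Q', Q') is again exclusively
   autocatalytic, since
   - deleting rows preserves semi-positivity, giving (i);
   - every kept species is consumed inside Q' by construction, giving (ii);
   - every reaction of Q' ⊆ R_A consumes a species of A_C by (iii) for the
     core, and that species is kept, giving (iii) and non-emptiness;
   - Q' is nonempty because an empty column set cannot make a row positive.
   As Q' ≠ R_A, this motif contradicts the minimality of the core. *)
From mathcomp Require Import all_boot all_order all_algebra.
From mathcomp Require Import reals.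
Set Implicit Arguments. Unset Strict Implicit. Unset Printing Implicit Defensive.
Import Order.TTheory GRing.Theory Num.Theory.
Local Open Scope ring_scope.

Section SemiPositive.
Variables (R : realType) (I J : finType) (A : I -> J -> R).

Lemma semipositive_sub_rows (P P' : {set I}) (Q : {set J}) :
  P' \subset P -> semipositive_sub A P Q -> semipositive_sub A P' Q.
Proof.
move=> /subsetP sPP' [v [vpos Av]]; exists v; split=> // i iP'.
exact: Av (sPP' i iP').
Qed.

Lemma semipositive_sub_cols_neq0 (P : {set I}) (Q : {set J}) :
  P != set0 -> semipositive_sub A P Q -> Q != set0.
Proof.
case/set0Pn=> i iP [v [_ Av]]; apply/eqP=> Q0.
by move: (Av i iP); rewrite Q0 big_set0 ltxx.
Qed.

End SemiPositive.

Section ConsumedSpecies.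
Variables (R : realType) (G : CRN).

Definition consumed (M : {set species G}) (N : {set reaction G}) :
    {set species G} :=
  [set s in M | [exists r in N, Sin s r != 0%N]].

Lemma consumed_sub (M : {set species G}) (N : {set reaction G}) :
  consumed M N \subset M.
Proof. by apply/subsetP=> s; rewrite inE => /andP[]. Qed.

Lemma consumed_exclusively_autocatalytic
    (M : {set species G}) (N : {set reaction G}) :
  N != set0 ->
  semipositive_sub (@stoich R G) M N ->
  (forall r, r \in N -> exists2 s, s \in M & Sin s r != 0%N) ->
  exclusively_autocatalytic R (consumed M N) N.
Proof.
move=> Nn spMN cols.
have colsC r : r \in N -> exists2 s, s \in consumed M N & Sin s r != 0%N.
  move=> rN; have [s sM srN] := cols r rN.
  by exists s => //; rewrite inE sM; apply/existsP; exists r; rewrite rN.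
split=> //.
- by case/set0Pn: Nn => r /colsC [s sC _]; apply/set0Pn; exists s.
- exact: semipositive_sub_rows (consumed_sub M N) spMN.
- by move=> s; rewrite inE => /andP[_ /existsP[r /andP[rN srN]]]; exists r.
Qed.

End ConsumedSpecies.

Theorem mainTheorem4 (R : realType) (G : CRN)
    (AC : {set species G}) (RA : {set reaction G}) :
  autocatalytic_core R AC RA ->
  minimal_semipositive_sub (@stoich R G) AC RA.
Proof.
move=> [[ACn _ spCore _ colsCore] coreMin]; split=> // Q' ltQ' spQ'.
have sQ' : Q' \subset RA := proper_sub ltQ'.
have neQ' : Q' != RA by move: ltQ'; rewrite properEneq => /andP[].
have colsQ' r : r \in Q' -> exists2 s, s \in AC & Sin s r != 0%N.
  by move=> rQ'; apply: colsCore; apply: (subsetP sQ').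
apply: (coreMin (consumed AC Q') Q' (consumed_sub AC Q') sQ').
- by case=> _ eQ'; rewrite eQ' eqxx in neQ'.
- apply: consumed_exclusively_autocatalytic => //.
  exact: semipositive_sub_cols_neq0 ACn spQ'.
Qed.
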